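(* Let $\gamma=\begin{pmatrix}a&b\\c&d\end{pmatrix}\in\mathrm{PSL}(2,\mathbb{Z})$, $n=\mathcal{R}(\gamma;z_q)$, let $x_\gamma,y_\gamma$ be as in the context, and define the integers \[ r=a+d,\quad u=b-|z_q|^2c-2\mu d,\quad s=a-d-2\mu c,\quad t=b+|z_q|^2c. \] Then $N(u+rz_q)=n+2\lambda^2$, $N(t+sz_q)=n-2\lambda^2$, and \[ y_\gamma+ix_\gamma=(u+rz_q)(t+s\overline{z_q}). \] Moreover, for every $n\in\mathcal{N}_{z_q}$, the set $L_n=\{(x_\gamma,y_\gamma):\gamma\in\Gamma_{z_q,n}\}$ satisfies \[ |L_n|=\frac{2c_n}{|\mathcal{O}_K^\times|}\,r_K(n+2\lambda^2)\,r_K(n-2\lambda^2), \] with $c_n=1/2$ if ($q$ even and $2\mid n$) or ($q$ odd and $q\mid 2n$), and $c_n=1/4$ otherwise.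
   Context: Let $q\in\{3,4,7,8,11,19,43,67,163\}$, $K$ the imaginary quadratic field of discriminant $-q$ (class number one), with ring of integers $\mathcal{O}_K$, unit group $\mathcal{O}_K^\times$, norm $N$; $r_K(M)$ is the number of elements of $\mathcal{O}_K$ of norm $M$ ($r_K(0)=1$). Let $z_q=\mu+i\lambda$ with $\mu=0$ if $q\in\{4,8\}$, $\mu=1/2$ otherwise, $\lambda=\sqrt q/2$. $\mathbb{H}$ is the upper half-plane with hyperbolic distance $\rho$, $\cosh\rho(z,w)=1+\frac{|z-w|^2}{2\,\mathrm{Im}(z)\mathrm{Im}(w)}$; $\Gamma=\mathrm{PSL}(2,\mathbb{Z})$. For $\gamma\in\Gamma$, $\mathcal{R}(\gamma;z_q)=2\lambda^2\cosh\rho(z_q,\gamma z_q)$, $\mathcal{N}_{z_q}=\{\mathcal{R}(\gamma;z_q):\gamma\in\Gamma\}$, $\Gamma_{z_q,n}=\{\gamma:\mathcal{R}(\gamma;z_q)=n\}$. For $\gamma=\begin{pmatrix}a&b\\c&d\end{pmatrix}$ with $n=\mathcal{R}(\gamma;z_q)$: $x_\gamma=2\lambda((\mu a+b)(\mu c+d)+\lambda^2ac-\mu((\mu c+d)^2+\lambda^2c^2))$ and $y_\gamma=n-2\lambda^2((\mu c+d)^2+\lambda^2c^2)$ (these do not depend on the sign of the matrix representing $\gamma$). *)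

From Stdlib Require Import Reals ZArith List ClassicalDescription.
From Coquelicot Require Import Coquelicot.
Import ListNotations.
Open Scope R_scope.

Definition qset (q : nat) : Prop := In q [3;4;7;8;11;19;43;67;163]%nat.

Definition mu (q : nat) : R :=
  if (Nat.eqb q 4 || Nat.eqb q 8)%bool then 0 else 1/2.
Definition lam (q : nat) : R := sqrt (INR q) / 2.
Definition zq (q : nat) : C := (mu q, lam q).

Definition cosh_rho (z w : C) : R :=
  1 + (Cmod (z - w)%C) ^ 2 / (2 * Im z * Im w).

Definition mobius (a b c d : Z) (z : C) : C :=
  ((RtoC (IZR a) * z + RtoC (IZR b)) / (RtoC (IZR c) * z + RtoC (IZR d)))%C.

(* (a b; c d) in SL(2,Z); PSL(2,Z) elements are represented by either lift *)
Definition isSL2 (a b c d : Z) : Prop := (a * d - b * c = 1)%Z.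

Definition Rgam (q : nat) (a b c d : Z) : R :=
  2 * lam q ^ 2 * cosh_rho (zq q) (mobius a b c d (zq q)).

Definition Nset (q : nat) (n : R) : Prop :=
  exists a b c d : Z, isSL2 a b c d /\ Rgam q a b c d = n.

Definition xg (q : nat) (a b c d : Z) : R :=
  let m := mu q in let l := lam q in
  2 * l * ((m * IZR a + IZR b) * (m * IZR c + IZR d) + l ^ 2 * IZR a * IZR c
           - m * ((m * IZR c + IZR d) ^ 2 + l ^ 2 * IZR c ^ 2)).

Definition yg (q : nat) (a b c d : Z) : R :=
  let m := mu q in let l := lam q in
  Rgam q a b c d - 2 * l ^ 2 * ((m * IZR c + IZR d) ^ 2 + l ^ 2 * IZR c ^ 2).

Definition Lset (q : nat) (n : R) (p : R * R) : Prop :=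
  exists a b c d : Z, isSL2 a b c d /\ Rgam q a b c d = n /\
                      p = (xg q a b c d, yg q a b c d).

(* ring of integers O_K = Z[z_q] (K of discriminant -q, class number one) *)
Definition OK (q : nat) (w : C) : Prop :=
  exists x y : Z, w = (RtoC (IZR x) + RtoC (IZR y) * zq q)%C.

Definition Nrm (w : C) : R := Re w ^ 2 + Im w ^ 2.

(* elements of O_K of norm M (their number is r_K(M)) *)
Definition normset (q : nat) (M : R) (w : C) : Prop := OK q w /\ Nrm w = M.

Definition units (q : nat) (w : C) : Prop :=
  OK q w /\ exists w' : C, OK q w' /\ (w * w')%C = RtoC 1.

Definition has_card {T : Type} (S : T -> Prop) (k : nat) : Prop :=
  exists l : list T, NoDup l /\ length l = k /\ forall x, In x l <-> S x.

Definition cn_cond (q : nat) (n : R) : Prop :=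
  (Nat.even q = true /\ exists k : Z, n = 2 * IZR k) \/
  (Nat.even q = false /\ exists k : Z, 2 * n = INR q * IZR k).

Definition cn (q : nat) (n : R) : R :=
  if excluded_middle_informative (cn_cond q n) then 1/2 else 1/4.

From Stdlib Require Import Reals ZArith List Lra Lia Psatz Znumtheory Permutation Bool FinFun
  ClassicalDescription.
From Coquelicot Require Import Coquelicot.
Import ListNotations.
Open Scope R_scope.
Set Bullet Behavior "Strict Subproofs".

(* Write the ring of integers as pairs [(x, y)], standing for [x + y z_q], where
   [z_q^2 = m z_q - k] with [m = 2 mu], [k = |z_q|^2] and [q = 4 k - m^2].  For
   [gamma = (a b; c d)] put [alpha = u + r z_q] and [beta = t + s z_q].  Then
   [N(alpha) - N(beta) = q (a d - b c)], [2 lam^2 cosh rho(z_q, gamma z_q) = N(beta) + q/2]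
   because [(c z_q + d) z_q - (a z_q + b) = - beta], and [y_gamma + i x_gamma = alpha conj(beta)].

   Conversely, a pair [(alpha, beta)] with [N(alpha) - N(beta) = q] comes from a matrix
   of [SL(2, Z)] iff a congruence modulo [q] holds, and two such pairs have the same
   product [alpha conj(beta)] iff they differ by a unit: writing [beta = P - z_q Q] and
   [alpha = P - conj(z_q) Q], the quotient [alpha' / alpha] equals [a Q' - c P'].  Hence
   [|L_n| |O_K^x|] is the number of such pairs.  For a fixed [alpha] of norm [n + q/2],
   either every [beta] of norm [n - q/2] is admissible (this is [c_n = 1/2]), or exactly
   one of [beta] and [eps beta] is, for a fixed unit [eps]: for the odd primes [q] because
   [(2 t + s)^2 = (2 u + r)^2] modulo [q], for [q = 4, 8] by a check on residues. *)

Section ListCounting.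
Local Open Scope nat_scope.

Lemma Permutation_filter_length {A} (f : A -> bool) (l l' : list A) :
  Permutation l l' -> length (filter f l) = length (filter f l').
Proof.
  induction 1; cbn; try congruence.
  - destruct (f x); cbn; congruence.
  - destruct (f x), (f y); reflexivity.
Qed.

Lemma length_filter_list_prod {A B} (P : A -> B -> bool) (l1 : list A) (l2 : list B) (c K : nat) :
  (forall a, In a l1 -> c * length (filter (P a) l2) = K) ->
  c * length (filter (fun v => P (fst v) (snd v)) (list_prod l1 l2)) = K * length l1.
Proof.
  induction l1 as [|a l1 IH]; intros H; cbn; [lia|].
  rewrite filter_app, length_app, filter_map_swap, length_map, Nat.mul_add_distr_l.
  rewrite IH by (intros; apply H; now right).
  change (fun y => P (fst (a, y)) (snd (a, y))) with (P a).
  rewrite (H a) by now left. lia.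
Qed.

Lemma NoDup_list_prod {A B} (l1 : list A) (l2 : list B) :
  NoDup l1 -> NoDup l2 -> NoDup (list_prod l1 l2).
Proof.
  induction 1 as [|a l1 Ha _ IH]; intros H2; cbn; [constructor|].
  apply NoDup_app; auto.
  - apply Injective_map_NoDup; auto. intros x y E. now injection E.
  - intros [x y] Hin Hin'. apply in_map_iff in Hin as [z [E _]]. injection E as <- <-.
    apply in_prod_iff in Hin'. tauto.
Qed.

Lemma has_card_image {A B} (S : B -> Prop) (f : A -> B) (l : list A) :
  NoDup l -> Injective f -> (forall w, S w <-> exists p, w = f p /\ In p l) ->
  has_card S (length l).
Proof.
  intros Hl Hf HS. exists (map f l). split; [|split].
  - now apply Injective_map_NoDup.
  - apply length_map.
  - intros w. rewrite HS, in_map_iff. split; intros [p [H1 H2]]; eauto.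
Qed.

Lemma filter_subsumed {A} (g h : A -> bool) (l : list A) :
  (forall x, g x = true -> h x = true) -> filter g (filter h l) = filter g l.
Proof.
  intros H. induction l as [|x l IH]; cbn; [reflexivity|].
  destruct (h x) eqn:Eh, (g x) eqn:Eg; cbn; rewrite ?Eg, ?IH; try reflexivity.
  now rewrite (H x Eg) in Eh.
Qed.

Section Fibres.
Context {A B : Type} (eq_dec : forall x y : B, {x = y} + {x <> y}) (f : A -> B).

Definition fibre_size (y : B) (l : list A) : nat :=
  length (filter (fun x => if eq_dec (f x) y then true else false) l).

Lemma length_uniform_fibres_aux (U : nat) (ys : list B) : NoDup ys ->
  forall l, (forall x, In x l -> In (f x) ys) -> (forall y, In y ys -> fibre_size y l = U) ->
  length l = U * length ys.
Proof.
  induction 1 as [|y ys Hy _ IH]; intros l Hcov Hsize.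
  - destruct l as [|x l]; [cbn; lia|]. destruct (Hcov x); now left.
  - set (l' := filter (fun x => negb (if eq_dec (f x) y then true else false)) l).
    rewrite <- (filter_length (fun x => if eq_dec (f x) y then true else false) l).
    fold (fibre_size y l). fold l'. rewrite Hsize by now left. cbn.
    rewrite (IH l'); [lia| |].
    + intros x Hx. apply filter_In in Hx as [Hx Hne].
      destruct (Hcov x Hx); [|assumption]. destruct (eq_dec (f x) y); cbn in Hne; congruence.
    + intros y' Hy'. rewrite <- (Hsize y' (or_intror Hy')). unfold fibre_size, l'.
      f_equal. apply filter_subsumed. intros x.
      destruct (eq_dec (f x) y'), (eq_dec (f x) y); cbn; congruence.
Qed.

Lemma length_uniform_fibres (U : nat) (l : list A) :
  (forall x, In x l -> fibre_size (f x) l = U) ->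
  length l = U * length (nodup eq_dec (map f l)).
Proof.
  intros H. apply length_uniform_fibres_aux.
  - apply NoDup_nodup.
  - intros x Hx. now apply nodup_In, in_map.
  - intros y Hy. apply nodup_In, in_map_iff in Hy as [x [<- Hx]]. auto.
Qed.

End Fibres.
End ListCounting.

(** * The quadratic order *)

Definition Zpair_eq_dec : forall p p' : Z * Z, {p = p'} + {p <> p'}.
Proof. decide equality; apply Z.eq_dec. Defined.

Section QuadraticOrder.
Local Open Scope Z_scope.
Variables m k : Z.

(* [(x, y)] stands for [x + y w] with [w^2 = m w - k]. *)
Definition qnorm (p : Z * Z) : Z :=
  fst p * fst p + m * fst p * snd p + k * snd p * snd p.

Definition qmul (p p' : Z * Z) : Z * Z :=
  (fst p * fst p' - k * snd p * snd p', fst p * snd p' + fst p' * snd p + m * snd p * snd p').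

Definition qconj (p : Z * Z) : Z * Z := (fst p + m * snd p, - snd p).

Lemma qnorm_mul p p' : qnorm (qmul p p') = qnorm p * qnorm p'.
Proof. unfold qnorm, qmul; cbn [fst snd]; ring. Qed.

Lemma qmul_qconj p : qmul p (qconj p) = (qnorm p, 0).
Proof. unfold qnorm, qmul, qconj; cbn [fst snd]; f_equal; ring. Qed.

Lemma qmul_qconj_l_qmul e p : qmul (qconj e) (qmul e p) = (qnorm e * fst p, qnorm e * snd p).
Proof. unfold qnorm, qmul, qconj; cbn [fst snd]; f_equal; ring. Qed.

Lemma qmul_qmul_qconj e p : qmul e (qmul (qconj e) p) = (qnorm e * fst p, qnorm e * snd p).
Proof. unfold qnorm, qmul, qconj; cbn [fst snd]; f_equal; ring. Qed.

Lemma qmul_qmul_qconj_qmul e p p' :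
  qmul (qmul e p) (qconj (qmul e p'))
  = (qnorm e * fst (qmul p (qconj p')), qnorm e * snd (qmul p (qconj p'))).
Proof. unfold qnorm, qmul, qconj; cbn [fst snd]; f_equal; ring. Qed.

Lemma four_qnorm p :
  4 * qnorm p = (2 * fst p + m * snd p) ^ 2 + (4 * k - m * m) * snd p ^ 2.
Proof. unfold qnorm; ring. Qed.

Hypothesis disc_pos : 0 < 4 * k - m * m.

Lemma qnorm_nonneg p : 0 <= qnorm p.
Proof. pose proof (four_qnorm p). nia. Qed.

Definition coord_bound (M : Z) : Z := (1 + Z.abs m) * (2 * Z.abs M + 1).

Lemma qnorm_coord_bound p :
  Z.abs (fst p) <= coord_bound (qnorm p) /\ Z.abs (snd p) <= coord_bound (qnorm p).
Proof.
  destruct p as [x y]. pose proof (four_qnorm (x, y)) as H4. pose proof (qnorm_nonneg (x, y)).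
  unfold coord_bound. cbn [fst snd] in *. set (M := qnorm (x, y)) in *.
  assert (sq : forall a, a ^ 2 <= 4 * M -> Z.abs a <= 2 * M + 1) by (intros; nia).
  assert (Hy : Z.abs y <= 2 * M + 1) by (apply sq; nia).
  assert (Hx : Z.abs (2 * x + m * y) <= 2 * M + 1) by (apply sq; nia).
  rewrite (Z.abs_eq M) by assumption. split; nia.
Qed.

Definition zrange (B : Z) : list Z := map (fun i => Z.of_nat i - B) (seq 0 (Z.to_nat (2 * B + 1))).

Lemma In_zrange B x : 0 <= B -> In x (zrange B) <-> Z.abs x <= B.
Proof.
  intros HB. unfold zrange. rewrite in_map_iff. split.
  - intros [i [<- Hi]]. apply in_seq in Hi. lia.
  - intros H. exists (Z.to_nat (x + B)). split; [lia|]. apply in_seq. lia.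
Qed.

Lemma NoDup_zrange B : NoDup (zrange B).
Proof. apply Injective_map_NoDup; [intros i j E; lia | apply seq_NoDup]. Qed.

Definition qnorm_list (M : Z) : list (Z * Z) :=
  filter (fun p => qnorm p =? M)
    (list_prod (zrange (coord_bound M)) (zrange (coord_bound M))).

Lemma NoDup_qnorm_list M : NoDup (qnorm_list M).
Proof. apply NoDup_filter, NoDup_list_prod; apply NoDup_zrange. Qed.

Lemma In_qnorm_list M p : In p (qnorm_list M) <-> qnorm p = M.
Proof.
  assert (0 <= coord_bound M) by (unfold coord_bound; lia).
  destruct p as [x y]. unfold qnorm_list.
  rewrite filter_In, in_prod_iff, Z.eqb_eq, !In_zrange by assumption.
  split; [tauto|]. intros <-. pose proof (qnorm_coord_bound (x, y)). tauto.
Qed.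

Lemma qmul_unit_Permutation e M :
  qnorm e = 1 -> Permutation (map (qmul e) (qnorm_list M)) (qnorm_list M).
Proof.
  intros He. apply NoDup_Permutation; [| apply NoDup_qnorm_list |].
  - apply Injective_map_NoDup; [| apply NoDup_qnorm_list].
    intros [x y] [x' y'] E. apply (f_equal (qmul (qconj e))) in E.
    now rewrite !qmul_qconj_l_qmul, He, !Z.mul_1_l in E.
  - intros p. rewrite in_map_iff, In_qnorm_list. split.
    + intros [p' [<- Hp']]. apply In_qnorm_list in Hp'. rewrite qnorm_mul, He, Hp'. lia.
    + intros Hp. exists (qmul (qconj e) p). split.
      * rewrite qmul_qmul_qconj, He, !Z.mul_1_l. now destruct p.
      * apply In_qnorm_list. rewrite qnorm_mul, Hp.
        assert (qnorm (qconj e) = qnorm e) by (unfold qnorm, qconj; cbn [fst snd]; ring). lia.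
Qed.

End QuadraticOrder.

Section MatrixPairs.
Local Open Scope Z_scope.
Variables m k : Z.

Definition alpha (a b c d : Z) : Z * Z := (b - k * c - m * d, a + d).
Definition beta (a b c d : Z) : Z * Z := (b + k * c, a - d - m * c).

Lemma qnorm_alpha_sub_beta a b c d :
  qnorm m k (alpha a b c d) - qnorm m k (beta a b c d) = (4 * k - m * m) * (a * d - b * c).
Proof. unfold qnorm, alpha, beta; cbn [fst snd]; ring. Qed.

Definition is_matrix_pair (al be : Z * Z) : Prop :=
  exists a b c d, alpha a b c d = al /\ beta a b c d = be.

(* [(c, d)] solves [[2k, m], [m, 2]] (c, d) = (t - u, r - s); the test is that the
   adjugate maps [(t - u, r - s)] to multiples of the determinant [4k - m^2]. *)
Definition matrix_pairb (al be : Z * Z) : bool :=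
  let '(u, r) := al in let '(t, s) := be in
  ((2 * (t - u) - m * (r - s)) mod (4 * k - m * m) =? 0) &&
  ((2 * k * (r - s) - m * (t - u)) mod (4 * k - m * m) =? 0).

Lemma matrix_pair_unit_mul e al be : qnorm m k e = 1 -> is_matrix_pair al be ->
  is_matrix_pair (qmul m k e al) (qmul m k e be) /\
  qmul m k (qmul m k e al) (qconj m (qmul m k e be)) = qmul m k al (qconj m be).
Proof.
  intros He [a [b [c [d [<- <-]]]]]. split.
  - set (P := qmul m k e (b, a)). set (Q := qmul m k e (d, c)).
    exists (snd P), (fst P), (snd Q), (fst Q).
    unfold P, Q, alpha, beta, qmul. destruct e as [e1 e2]. cbn [fst snd]. split; f_equal; ring.
  - rewrite qmul_qmul_qconj_qmul, He, !Z.mul_1_l. apply surjective_pairing.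
Qed.

Hypothesis disc_pos : 0 < 4 * k - m * m.

Lemma matrix_pairP al be : is_matrix_pair al be <-> matrix_pairb al be = true.
Proof.
  destruct al as [u r], be as [t s]. unfold is_matrix_pair, matrix_pairb, alpha, beta.
  rewrite andb_true_iff, !Z.eqb_eq, !Z.mod_divide by lia. split.
  - intros [a [b [c [d [E1 E2]]]]]. injection E1 as <- <-. injection E2 as <- <-.
    split; [exists c | exists d]; ring.
  - intros [[c Hc] [d Hd]]. exists (r - d), (t - k * c), c, d.
    assert (E1 : (4 * k - m * m) * (t - u) = (4 * k - m * m) * (2 * k * c + m * d))
      by (transitivity (2 * k * (2 * (t - u) - m * (r - s)) + m * (2 * k * (r - s) - m * (t - u)));
          [ring | rewrite Hc, Hd; ring]).
    assert (E2 : (4 * k - m * m) * (r - s) = (4 * k - m * m) * (2 * d + m * c))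
      by (transitivity (m * (2 * (t - u) - m * (r - s)) + 2 * (2 * k * (r - s) - m * (t - u)));
          [ring | rewrite Hc, Hd; ring]).
    apply Z.mul_reg_l in E1, E2; try lia. split; f_equal; lia.
Qed.

Lemma matrix_pair_det al be :
  is_matrix_pair al be -> qnorm m k al - qnorm m k be = 4 * k - m * m ->
  exists a b c d, alpha a b c d = al /\ beta a b c d = be /\ a * d - b * c = 1.
Proof.
  intros [a [b [c [d [<- <-]]]]] H. exists a, b, c, d. repeat split.
  rewrite qnorm_alpha_sub_beta in H.
  apply (Z.mul_reg_l _ _ (4 * k - m * m)); lia.
Qed.

End MatrixPairs.

(** * The congruence dichotomy *)

Section Dichotomy.
Local Open Scope Z_scope.
Variables m k : Z.

Definition cn_condb (M : Z) : bool :=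
  if m =? 0 then Z.even M else M mod (4 * k - m * m) =? 0.

(* For [q = 4] negation preserves [matrix_pairb], so the twist is [i] there. *)
Definition twist : Z * Z := if (m =? 0) && (k =? 1) then (0, 1) else (-1, 0).

Definition dichotomyb (al be : Z * Z) : bool :=
  if cn_condb (qnorm m k al) then matrix_pairb m k al be
  else Bool.eqb (matrix_pairb m k al (qmul m k twist be)) (negb (matrix_pairb m k al be)).

Lemma qnorm_twist : qnorm m k twist = 1.
Proof.
  unfold twist. destruct (m =? 0) eqn:Em, (k =? 1) eqn:Ek; cbn [andb];
    unfold qnorm; cbn [fst snd]; try apply Z.eqb_eq in Em; try apply Z.eqb_eq in Ek;
    try subst; ring.
Qed.

Lemma dichotomybP al be : dichotomyb al be = true ->
  (cn_condb (qnorm m k al) = true -> matrix_pairb m k al be = true) /\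
  (cn_condb (qnorm m k al) = false ->
     matrix_pairb m k al (qmul m k twist be) = negb (matrix_pairb m k al be)).
Proof.
  unfold dichotomyb. destruct (cn_condb (qnorm m k al)); intros H; split; try discriminate; auto.
  intros _. now apply Bool.eqb_prop.
Qed.

End Dichotomy.

Lemma prime_by_gcd (p : Z) : (1 < p)%Z ->
  forallb (fun i => Z.gcd (Z.of_nat i) p =? 1)%Z (seq 1 (Z.to_nat p - 1)) = true -> prime p.
Proof.
  intros H1 H2. apply prime_intro; [assumption|]. intros n Hn.
  apply Zgcd_1_rel_prime. rewrite forallb_forall in H2.
  specialize (H2 (Z.to_nat n)). rewrite Z2Nat.id in H2 by lia. apply Z.eqb_eq, H2, in_seq. lia.
Qed.

Section OddPrimeDiscriminant.
Local Open Scope Z_scope.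
Variables (k : Z) (prime_disc : prime (4 * k - 1)).

Let q := 4 * k - 1.

Lemma disc_ge3 : 3 <= q.
Proof. pose proof (prime_ge_2 _ prime_disc). unfold q in *. lia. Qed.

Lemma rel_prime_disc_2 : rel_prime q 2.
Proof. apply bezout_rel_prime. apply (Bezout_intro _ _ _ (-1) (2 * k)). unfold q. ring. Qed.

Lemma prime_divide_sqr a : (q | a ^ 2) -> (q | a).
Proof. rewrite Z.pow_2_r. intros H. now destruct (prime_mult _ prime_disc a a H). Qed.

Lemma matrix_pairb_odd u r t s :
  matrix_pairb 1 k (u, r) (t, s) = true <-> (q | (2 * t + s) - (2 * u + r)).
Proof.
  pose proof disc_ge3. unfold matrix_pairb.
  replace (4 * k - 1 * 1) with q by (unfold q; ring).
  rewrite andb_true_iff, !Z.eqb_eq, !Z.mod_divide by lia.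
  replace (2 * (t - u) - 1 * (r - s)) with ((2 * t + s) - (2 * u + r)) by ring.
  split; [tauto|]. intros Hd. split; [assumption|].
  (* twice the second residue is [q (r - s)] minus the first *)
  apply (Gauss _ 2); [| apply rel_prime_disc_2].
  replace (2 * (2 * k * (r - s) - 1 * (t - u))) with (q * (r - s) - ((2 * t + s) - (2 * u + r)))
    by (unfold q; ring).
  apply Z.divide_sub_r; [apply Z.divide_factor_l | assumption].
Qed.

Lemma divide_qnorm_odd u r : (q | qnorm 1 k (u, r)) <-> (q | 2 * u + r).
Proof.
  pose proof (four_qnorm 1 k (u, r)) as H4. cbn [fst snd] in H4.
  replace (4 * k - 1 * 1) with q in H4 by (unfold q; ring). rewrite Z.mul_1_l in H4.
  split; intros Hd.
  - apply prime_divide_sqr.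
    replace ((2 * u + r) ^ 2) with (qnorm 1 k (u, r) * 4 - r ^ 2 * q) by lia.
    apply Z.divide_sub_r; [now apply Z.divide_mul_l | apply Z.divide_factor_r].
  - apply (Gauss _ 2); [| apply rel_prime_disc_2]. apply (Gauss _ 2); [| apply rel_prime_disc_2].
    replace (2 * (2 * qnorm 1 k (u, r))) with ((2 * u + r) * (2 * u + r) + r ^ 2 * q) by lia.
    apply Z.divide_add_r; [now apply Z.divide_mul_l | apply Z.divide_factor_r].
Qed.

Lemma dichotomyb_odd al be :
  qnorm 1 k al - qnorm 1 k be = q -> dichotomyb 1 k al be = true.
Proof.
  intros Hdiff. pose proof disc_ge3. destruct al as [u r], be as [t s].
  assert (Htw : qmul 1 k (twist 1 k) (t, s) = (- t, - s))
    by (unfold qmul, twist; cbn [fst snd andb Z.eqb]; f_equal; ring).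
  unfold dichotomyb, cn_condb. cbn [Z.eqb]. rewrite Htw.
  replace (4 * k - 1 * 1) with q by (unfold q; ring).
  destruct (qnorm 1 k (u, r) mod q =? 0) eqn:Hc.
  - apply Z.eqb_eq, Z.mod_divide, divide_qnorm_odd in Hc; [|lia].
    assert (HB : (q | 2 * t + s)).
    { apply divide_qnorm_odd. replace (qnorm 1 k (t, s)) with (qnorm 1 k (u, r) - q) by lia.
      apply Z.divide_sub_r; [now apply divide_qnorm_odd | apply Z.divide_refl]. }
    now apply matrix_pairb_odd, Z.divide_sub_r.
  - assert (HnA : ~ (q | 2 * u + r))
      by (rewrite <- divide_qnorm_odd, <- Z.mod_divide by lia; now apply Z.eqb_neq).
    assert (Hprod : (q | (2 * t + s - (2 * u + r)) * (2 * - t + - s - (2 * u + r)))).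
    { pose proof (four_qnorm 1 k (u, r)) as HA. pose proof (four_qnorm 1 k (t, s)) as HB.
      cbn [fst snd] in HA, HB. replace (4 * k - 1 * 1) with q in HA, HB by (unfold q; ring).
      exists (4 + s ^ 2 - r ^ 2). nia. }
    apply Bool.eqb_true_iff.
    destruct (matrix_pairb 1 k (u, r) (t, s)) eqn:E1, (matrix_pairb 1 k (u, r) (- t, - s)) eqn:E2;
      cbn [negb]; try reflexivity; exfalso.
    + apply matrix_pairb_odd in E1, E2. apply HnA, (Gauss _ 2); [| apply rel_prime_disc_2].
      replace (2 * (2 * u + r)) with (- (2 * - t + - s - (2 * u + r)) - (2 * t + s - (2 * u + r)))
        by ring.
      apply Z.divide_sub_r; [now apply Z.divide_opp_r | assumption].
    + rewrite <- not_true_iff_false, !matrix_pairb_odd in E1, E2.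
      now destruct (prime_mult _ prime_disc _ _ Hprod).
Qed.

End OddPrimeDiscriminant.

Section EvenDiscriminant.
Local Open Scope Z_scope.
Variable k : Z.

Lemma qnorm0_shift u r a b :
  qnorm 0 k (u + 4 * k * a, r + 4 * k * b)
  = qnorm 0 k (u, r) + 2 * (4 * k * (a * u + 2 * k * a * a + k * b * r + 2 * k * k * b * b)).
Proof. unfold qnorm; cbn [fst snd]; ring. Qed.

Lemma matrix_pairb0_shift u r t s a b c d :
  matrix_pairb 0 k (u + 4 * k * a, r + 4 * k * b) (t + 4 * k * c, s + 4 * k * d)
  = matrix_pairb 0 k (u, r) (t, s).
Proof.
  unfold matrix_pairb. replace (4 * k - 0 * 0) with (4 * k) by ring.
  rewrite <- (Z_mod_plus_full (2 * (t - u) - 0 * (r - s)) (2 * (c - a))),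
    <- (Z_mod_plus_full (2 * k * (r - s) - 0 * (t - u)) (2 * k * (b - d))).
  do 2 f_equal; f_equal; ring.
Qed.

Lemma qmul_shift e t s c d :
  qmul 0 k e (t + 4 * k * c, s + 4 * k * d)
  = (fst (qmul 0 k e (t, s)) + 4 * k * fst (qmul 0 k e (c, d)),
     snd (qmul 0 k e (t, s)) + 4 * k * snd (qmul 0 k e (c, d))).
Proof. unfold qmul; cbn [fst snd]; f_equal; ring. Qed.

Lemma dichotomyb0_shift u r t s a b c d :
  dichotomyb 0 k (u + 4 * k * a, r + 4 * k * b) (t + 4 * k * c, s + 4 * k * d)
  = dichotomyb 0 k (u, r) (t, s).
Proof.
  unfold dichotomyb, cn_condb. cbn [Z.eqb].
  rewrite qnorm0_shift, Z.even_add_mul_2, qmul_shift, !matrix_pairb0_shift, <- surjective_pairing.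
  reflexivity.
Qed.

Definition residues (n : Z) : list Z := map Z.of_nat (seq 0 (Z.to_nat n)).

(* By the shift lemmas, [dichotomyb 0 k] depends only on residues modulo [4 k], and
   the norm condition on them only modulo [8 k]. *)
Definition residue_check : bool :=
  forallb (fun u => forallb (fun r => forallb (fun t => forallb (fun s =>
    negb ((qnorm 0 k (u, r) - qnorm 0 k (t, s) - 4 * k) mod (8 * k) =? 0)
    || dichotomyb 0 k (u, r) (t, s))
  (residues (4 * k))) (residues (4 * k))) (residues (4 * k))) (residues (4 * k)).

Lemma dichotomyb_even al be : 0 < k -> residue_check = true ->
  qnorm 0 k al - qnorm 0 k be = 4 * k -> dichotomyb 0 k al be = true.
Proof.
  intros Hk Hcheck Hdiff. destruct al as [u r], be as [t s].
  assert (Hdec : forall x, exists x0 a, x = x0 + 4 * k * a /\ In x0 (residues (4 * k))).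
  { intros x. exists (x mod (4 * k)), (x / (4 * k)). split.
    - rewrite (Z.div_mod x (4 * k)) at 1 by lia. ring.
    - apply in_map_iff. exists (Z.to_nat (x mod (4 * k))).
      pose proof (Z.mod_pos_bound x (4 * k)). split; [lia | apply in_seq; lia]. }
  destruct (Hdec u) as [u0 [a [-> Hu]]], (Hdec r) as [r0 [b [-> Hr]]],
    (Hdec t) as [t0 [c [-> Ht]]], (Hdec s) as [s0 [d [-> Hs]]].
  rewrite dichotomyb0_shift. rewrite !qnorm0_shift in Hdiff.
  unfold residue_check in Hcheck.
  rewrite forallb_forall in Hcheck. specialize (Hcheck _ Hu).
  rewrite forallb_forall in Hcheck. specialize (Hcheck _ Hr).
  rewrite forallb_forall in Hcheck. specialize (Hcheck _ Ht).
  rewrite forallb_forall in Hcheck. specialize (Hcheck _ Hs).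
  apply orb_true_iff in Hcheck as [Hcong | Hdich]; [exfalso | assumption].
  apply negb_true_iff, Z.eqb_neq in Hcong. apply Hcong, Z.mod_divide; [lia|].
  exists ((c * t0 + 2 * k * c * c + k * d * s0 + 2 * k * k * d * d)
          - (a * u0 + 2 * k * a * a + k * b * r0 + 2 * k * k * b * b)).
  lia.
Qed.

End EvenDiscriminant.

Lemma residue_check_1_2 : residue_check 1 = true /\ residue_check 2 = true.
Proof. split; vm_compute; reflexivity. Qed.

(* [z_q^2 = mZ q * z_q - kZ q] *)
Definition mZ (q : nat) : Z := if (Nat.eqb q 4 || Nat.eqb q 8)%bool then 0 else 1.
Definition kZ (q : nat) : Z := ((Z.of_nat q + mZ q * mZ q) / 4)%Z.

Lemma mZ_cases q : (mZ q = 0 \/ mZ q = 1)%Z.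
Proof. unfold mZ. destruct (_ || _)%bool; auto. Qed.

Lemma IZR_mZ q : IZR (mZ q) = 2 * mu q.
Proof. unfold mZ, mu. destruct (_ || _)%bool; cbn; lra. Qed.

Lemma lam_sqr q : 4 * lam q ^ 2 = INR q.
Proof.
  unfold lam. pose proof (pos_INR q).
  replace (4 * (sqrt (INR q) / 2) ^ 2) with (sqrt (INR q) ^ 2) by field.
  now apply pow2_sqrt.
Qed.

Lemma IZR_of_nat_q q : IZR (Z.of_nat q) = 4 * lam q ^ 2.
Proof. now rewrite <- INR_IZR_INZ, lam_sqr. Qed.

Ltac qset_cases H := repeat destruct H as [<- | H]; try destruct H.

Lemma qset_ge3 q : qset q -> (3 <= q)%nat.
Proof. intros Hq. qset_cases Hq; lia. Qed.

Lemma disc_mZ_kZ q : qset q -> (4 * kZ q - mZ q * mZ q)%Z = Z.of_nat q.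
Proof. intros Hq. qset_cases Hq; reflexivity. Qed.

Lemma qset_even q : qset q -> Nat.even q = true <-> mZ q = 0%Z.
Proof. intros Hq. qset_cases Hq; cbn; intuition discriminate. Qed.

Lemma lam_pos q : qset q -> 0 < lam q.
Proof.
  intros Hq. unfold lam. pose proof (qset_ge3 q Hq). apply Rdiv_lt_0_compat; [|lra].
  apply sqrt_lt_R0, lt_0_INR. lia.
Qed.

Lemma Cmod_zq_sqr q : qset q -> Cmod (zq q) ^ 2 = IZR (kZ q).
Proof.
  intros Hq. unfold Cmod, zq. cbn [fst snd]. rewrite pow2_sqrt by nra.
  pose proof (lam_sqr q) as Hl. pose proof (IZR_mZ q) as Hm. pose proof (disc_mZ_kZ q Hq) as Hd.
  apply (f_equal IZR) in Hd. rewrite <- INR_IZR_INZ, minus_IZR, !mult_IZR, Hm in Hd. lra.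
Qed.

Lemma dichotomyb_zq q al be : qset q ->
  (qnorm (mZ q) (kZ q) al - qnorm (mZ q) (kZ q) be = Z.of_nat q)%Z ->
  dichotomyb (mZ q) (kZ q) al be = true.
Proof.
  intros Hq. rewrite <- (disc_mZ_kZ q Hq). destruct residue_check_1_2 as [Hc1 Hc2].
  qset_cases Hq;
    match goal with |- context [mZ ?q] =>
      let m := eval vm_compute in (mZ q) in let k := eval vm_compute in (kZ q) in
      change (mZ q) with m; change (kZ q) with k end;
    first [ apply dichotomyb_even; [lia | assumption]
          | apply dichotomyb_odd, prime_by_gcd; [lia | reflexivity] ].
Qed.

Lemma two_Im_sqr_cosh_rho_mobius (z : C) (A B Cc D : R) : 0 < Im z -> A * D - B * Cc = 1 ->
  2 * Im z ^ 2 * cosh_rho z ((RtoC A * z + RtoC B) / (RtoC Cc * z + RtoC D))%C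
  = 2 * Im z ^ 2 + Nrm (RtoC A * z + RtoC B - (RtoC Cc * z + RtoC D) * z)%C.
Proof.
  destruct z as [x y]. intros Hy Hdet. cbn in Hy.
  assert (Hden : (Cc * x + D) ^ 2 + (Cc * y) ^ 2 <> 0).
  { destruct (Req_dec Cc 0) as [-> | Hc].
    - replace ((0 * x + D) ^ 2 + (0 * y) ^ 2) with (D * D) by ring.
      apply Rmult_integral_contrapositive_currified; intros ->; lra.
    - apply Rgt_not_eq. replace ((Cc * y) ^ 2) with ((Cc * y)²) by (unfold Rsqr; ring).
      pose proof (pow2_ge_0 (Cc * x + D)).
      pose proof (Rsqr_pos_lt (Cc * y)
        (Rmult_integral_contrapositive_currified _ _ Hc (Rgt_not_eq _ _ Hy))).
      lra. }
  unfold cosh_rho, Nrm, Cmod, Cminus, Cdiv, Cinv, Cmult, Cplus, Copp, RtoC, Re, Im. cbn [fst snd].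
  rewrite pow2_sqrt by (apply Rplus_le_le_0_compat; apply pow2_ge_0).
  (* the imaginary part of the image carries the factor [A D - B Cc] *)
  match goal with |- _ = 2 * y ^ 2 + ?N =>
    transitivity (2 * y ^ 2 + N / (A * D - B * Cc)); [|rewrite Hdet; field] end.
  field. rewrite Hdet. repeat split; try assumption; try lra.
  replace ((A * x + B) * - (Cc * y) + A * y * (Cc * x + D)) with (y * (A * D - B * Cc)) by ring.
  rewrite Hdet. lra.
Qed.

Lemma Cconj_neq_0 (a : C) : a <> 0%C -> Cconj a <> 0%C.
Proof. intros Ha E. apply Ha, Cmod_eq_0. now rewrite <- Cmod_conj, E, Cmod_0. Qed.

Lemma Cconj_mul_eq_scale (a b a' b' : C) : a <> 0%C ->
  (a * Cconj b = a' * Cconj b')%C -> (a * Cconj a = a' * Cconj a')%C -> b' = (a' / a * b)%C.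
Proof.
  intros Ha Hab Haa.
  assert (Ha' : a' <> 0%C).
  { intros ->. apply (Cmult_neq_0 a (Cconj a) Ha (Cconj_neq_0 a Ha)). rewrite Haa. ring. }
  assert (Hab' : (Cconj a * b = Cconj a' * b')%C)
    by (rewrite <- (Cconj_conj b), <- (Cconj_conj b'), <- !Cmult_conj, Hab; reflexivity).
  pose proof (Cconj_neq_0 a' Ha').
  transitivity (Cconj a * b / Cconj a')%C; [rewrite Hab'; field; assumption|].
  transitivity (a * Cconj a * b / (a * Cconj a'))%C; [field; now split|].
  rewrite Haa. field. now split.
Qed.

(** * The ring of integers inside [C] and the count of [L_n] *)

Ltac IZR_expand := repeat rewrite ?plus_IZR, ?minus_IZR, ?mult_IZR, ?opp_IZR in *.

Section ImaginaryQuadratic.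
Variables (q : nat) (Hq : qset q).
Local Notation m := (mZ q).
Local Notation k := (kZ q).

Lemma disc_pos_zq : (0 < 4 * k - m * m)%Z.
Proof. rewrite (disc_mZ_kZ q Hq). pose proof (qset_ge3 q Hq). lia. Qed.

Definition emb (p : Z * Z) : C := (RtoC (IZR (fst p)) + RtoC (IZR (snd p)) * zq q)%C.

Lemma OK_emb w : OK q w <-> exists p, w = emb p.
Proof.
  split.
  - intros [x [y ->]]. now exists (x, y).
  - intros [[x y] ->]. now exists x, y.
Qed.

Lemma IZR_kZ : IZR k = mu q ^ 2 + lam q ^ 2.
Proof.
  rewrite <- (Cmod_zq_sqr q Hq). unfold Cmod, zq. cbn [fst snd].
  rewrite pow2_sqrt by nra. ring.
Qed.

Ltac emb_components :=
  unfold emb, zq, qmul, qconj, qnorm, alpha, beta, Nrm, Cminus, Copp, Cmult, Cplus, Cconj, RtoC,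
    Re, Im; cbn [fst snd];
  IZR_expand; rewrite ?IZR_mZ, ?IZR_kZ;
  try (apply injective_projections; cbn [fst snd]); ring.

Lemma emb_qmul p p' : emb (qmul m k p p') = (emb p * emb p')%C.
Proof. emb_components. Qed.

Lemma emb_qconj p : emb (qconj m p) = Cconj (emb p).
Proof. emb_components. Qed.

Lemma Nrm_emb p : Nrm (emb p) = IZR (qnorm m k p).
Proof. emb_components. Qed.

Lemma emb_inj : Injective emb.
Proof.
  intros [x y] [x' y'] E. pose proof (lam_pos q Hq).
  unfold emb, zq, Cmult, Cplus, RtoC in E. cbn [fst snd] in E. injection E as E1 E2.
  assert (Hy : IZR y = IZR y') by nra. apply eq_IZR in Hy as ->.
  f_equal. apply eq_IZR. lra.
Qed.

Lemma emb_alpha a b c d :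
  emb (alpha m k a b c d) = (emb (b, a) - emb (d, c) * Cconj (zq q))%C.
Proof. emb_components. Qed.

Lemma emb_beta a b c d : emb (beta m k a b c d) = (emb (b, a) - emb (d, c) * zq q)%C.
Proof. emb_components. Qed.

Lemma Rgam_qnorm_beta a b c d : isSL2 a b c d ->
  Rgam q a b c d = IZR (qnorm m k (beta m k a b c d)) + 2 * lam q ^ 2.
Proof.
  intros Hdet. unfold isSL2 in Hdet. apply (f_equal IZR) in Hdet. IZR_expand.
  unfold Rgam, mobius. replace (lam q) with (Im (zq q)) by reflexivity.
  rewrite two_Im_sqr_cosh_rho_mobius by (assumption || apply (lam_pos q Hq)).
  replace (RtoC (IZR a) * zq q + RtoC (IZR b) - (RtoC (IZR c) * zq q + RtoC (IZR d)) * zq q)%C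
    with (emb (beta m k a b c d)) by (rewrite emb_beta; unfold emb; cbn [fst snd]; ring).
  rewrite Nrm_emb. ring.
Qed.

Lemma xy_emb a b c d : isSL2 a b c d ->
  ((yg q a b c d, xg q a b c d) : C)
  = (emb (alpha m k a b c d) * Cconj (emb (beta m k a b c d)))%C.
Proof.
  intros Hdet. unfold yg. rewrite (Rgam_qnorm_beta a b c d Hdet), <- Nrm_emb.
  unfold isSL2 in Hdet. apply (f_equal IZR) in Hdet. IZR_expand.
  unfold xg, emb, alpha, beta, zq, Nrm, Cconj, Cmult, Cplus, RtoC, Re, Im; cbn [fst snd].
  IZR_expand; rewrite IZR_mZ, IZR_kZ. apply injective_projections; cbn [fst snd]; [|ring].
  (* the real parts agree only modulo the determinant *)
  match goal with |- ?L = ?R =>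
    assert (E : L - R = -2 * lam q ^ 2 * (IZR a * IZR d - IZR b * IZR c - 1)) by ring end.
  rewrite Hdet in E. lra.
Qed.

Lemma qnorm_alpha_SL2 a b c d : isSL2 a b c d ->
  qnorm m k (alpha m k a b c d) = (qnorm m k (beta m k a b c d) + Z.of_nat q)%Z.
Proof.
  unfold isSL2. intros Hdet. pose proof (qnorm_alpha_sub_beta m k a b c d) as E.
  rewrite Hdet, (disc_mZ_kZ q Hq) in E. lia.
Qed.

Lemma emb_conj_coords (x y : R) :
  (RtoC x + RtoC y * Cconj (zq q))%C = Cconj (RtoC x + RtoC y * zq q)%C.
Proof. emb_components. Qed.

Lemma alpha_beta_factorisation :
  forall a b c d : Z, isSL2 a b c d ->
     let n := Rgam q a b c d in
     let z := zq q in
     let r := IZR (a + d) in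
     let u := IZR b - Cmod z ^ 2 * IZR c - 2 * mu q * IZR d in
     let s := IZR a - IZR d - 2 * mu q * IZR c in
     let t := IZR b + Cmod z ^ 2 * IZR c in
     (exists ui si ti : Z, u = IZR ui /\ s = IZR si /\ t = IZR ti) /\
     Nrm (RtoC u + RtoC r * z)%C = n + 2 * lam q ^ 2 /\
     Nrm (RtoC t + RtoC s * z)%C = n - 2 * lam q ^ 2 /\
     ((yg q a b c d, xg q a b c d) : C)
       = ((RtoC u + RtoC r * z) * (RtoC t + RtoC s * Cconj z))%C.
Proof.
  intros a b c d Hdet n z r u s t. subst z.
  assert (Hal : (RtoC u + RtoC r * zq q)%C = emb (alpha m k a b c d)).
  { unfold u, r, emb, alpha. cbn [fst snd]. rewrite (Cmod_zq_sqr q Hq), <- IZR_mZ.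
    do 2 f_equal; IZR_expand; ring. }
  assert (Hbe : (RtoC t + RtoC s * zq q)%C = emb (beta m k a b c d)).
  { unfold s, t, emb, beta. cbn [fst snd]. rewrite (Cmod_zq_sqr q Hq), <- IZR_mZ.
    do 2 f_equal; IZR_expand; ring. }
  split; [| split; [| split]].
  - exists (b - k * c - m * d)%Z, (a - d - m * c)%Z, (b + k * c)%Z.
    unfold u, s, t. rewrite (Cmod_zq_sqr q Hq), <- IZR_mZ. IZR_expand. repeat split; ring.
  - rewrite Hal, Nrm_emb, qnorm_alpha_SL2, plus_IZR, IZR_of_nat_q by assumption.
    unfold n. rewrite Rgam_qnorm_beta by assumption. ring.
  - rewrite Hbe, Nrm_emb. unfold n. rewrite Rgam_qnorm_beta by assumption. ring.
  - rewrite Hal, emb_conj_coords, Hbe. now apply xy_emb.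
Qed.

Lemma emb_comb (x y : Z) p p' :
  emb (x * fst p - y * fst p', x * snd p - y * snd p')%Z
  = (RtoC (IZR x) * emb p - RtoC (IZR y) * emb p')%C.
Proof. emb_components. Qed.

Lemma emb_one : emb (1, 0)%Z = 1%C.
Proof. emb_components. Qed.

Lemma emb_neq_0 p : qnorm m k p <> 0%Z -> emb p <> 0%C.
Proof.
  intros Hp E. apply Hp. replace p with (0, 0)%Z; [unfold qnorm; cbn [fst snd]; ring|].
  apply emb_inj. rewrite E. emb_components.
Qed.

Lemma zq_sub_conj_neq_0 : (zq q - Cconj (zq q))%C <> 0%C.
Proof.
  pose proof (lam_pos q Hq). unfold zq, Cconj, Cminus, Cplus, Copp; cbn [fst snd].
  intros E. injection E. lra.
Qed.

Lemma scale_of_alpha_beta (rho P Q P' Q' : C) :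
  (P' - Q' * Cconj (zq q) = rho * (P - Q * Cconj (zq q)))%C ->
  (P' - Q' * zq q = rho * (P - Q * zq q))%C -> P' = (rho * P)%C /\ Q' = (rho * Q)%C.
Proof.
  intros H1 H2. pose proof zq_sub_conj_neq_0.
  assert (HQ : Q' = (rho * Q)%C).
  { replace Q' with ((P' - Q' * Cconj (zq q) - (P' - Q' * zq q)) / (zq q - Cconj (zq q)))%C
      by (field; assumption).
    rewrite H1, H2. field. assumption. }
  split; [|assumption].
  replace P' with (P' - Q' * zq q + Q' * zq q)%C by ring. rewrite H2, HQ. ring.
Qed.

Lemma matrix_pair_fibre al be al' be' :
  is_matrix_pair m k al be -> is_matrix_pair m k al' be' ->
  (qnorm m k al - qnorm m k be = Z.of_nat q)%Z ->
  qnorm m k al' = qnorm m k al -> qnorm m k be' = qnorm m k be ->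
  qmul m k al (qconj m be) = qmul m k al' (qconj m be') ->
  exists e, qnorm m k e = 1%Z /\ al' = qmul m k e al /\ be' = qmul m k e be.
Proof.
  intros Hv Hv' Hdiff Hal Hbe Hprod. pose proof disc_pos_zq as Hdisc.
  rewrite <- (disc_mZ_kZ q Hq) in Hdiff.
  destruct (matrix_pair_det m k Hdisc al be Hv Hdiff) as [a [b [c [d [<- [<- Hdet]]]]]].
  destruct (matrix_pair_det m k Hdisc al' be' Hv' ltac:(lia)) as [a' [b' [c' [d' [<- [<- _]]]]]].
  pose proof (qnorm_nonneg m k Hdisc (beta m k a b c d)).
  assert (Hnz : qnorm m k (alpha m k a b c d) <> 0%Z) by lia.
  set (e := (a * d' - c * b', a * c' - c * a')%Z).
  set (rho := (emb (alpha m k a' b' c' d') / emb (alpha m k a b c d))%C).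
  assert (Hal' : emb (alpha m k a' b' c' d') = (rho * emb (alpha m k a b c d))%C)
    by (unfold rho; field; now apply emb_neq_0).
  assert (Hbe' : emb (beta m k a' b' c' d') = (rho * emb (beta m k a b c d))%C).
  { apply Cconj_mul_eq_scale; [now apply emb_neq_0 | |].
    - rewrite <- !emb_qconj, <- !emb_qmul. now f_equal.
    - rewrite <- !emb_qconj, <- !emb_qmul, !qmul_qconj, Hal. reflexivity. }
  destruct (scale_of_alpha_beta rho (emb (b, a)) (emb (d, c)) (emb (b', a')) (emb (d', c')))
    as [HP HQ]; [now rewrite <- !emb_alpha | now rewrite <- !emb_beta |].
  (* [e = a Q' - c P'] and [a Q - c P = a d - b c = 1] *)
  assert (Hrho : emb e = rho).
  { change e with (a * fst (d', c') - c * fst (b', a'), a * snd (d', c') - c * snd (b', a'))%Z.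
    rewrite emb_comb, HP, HQ.
    transitivity (rho * emb (a * fst (d, c) - c * fst (b, a), a * snd (d, c) - c * snd (b, a))%Z)%C;
      [rewrite emb_comb; ring|].
    cbn [fst snd]. unfold isSL2 in Hdet. replace (a * d - c * b)%Z with 1%Z by lia.
    replace (a * c - c * a)%Z with 0%Z by ring. rewrite emb_one. ring. }
  rewrite <- Hrho, <- !emb_qmul in Hal', Hbe'. apply emb_inj in Hal', Hbe'.
  exists e. split; [|split; assumption].
  apply (f_equal (qnorm m k)) in Hal'. rewrite qnorm_mul, Hal in Hal'.
  apply (Z.mul_reg_r _ _ (qnorm m k (alpha m k a b c d))); lia.
Qed.


Lemma qmul_reg_r p e e' : qnorm m k p <> 0%Z -> qmul m k e p = qmul m k e' p -> e = e'.
Proof.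
  intros Hp E. apply emb_inj. apply (f_equal emb) in E. rewrite !emb_qmul in E.
  pose proof (emb_neq_0 p Hp).
  replace (emb e) with (emb e * emb p / emb p)%C by (field; assumption).
  rewrite E. field. assumption.
Qed.

Lemma has_card_normset M : has_card (normset q (IZR M)) (length (qnorm_list m k M)).
Proof.
  apply has_card_image with (f := emb); [apply NoDup_qnorm_list | apply emb_inj |].
  intros w. unfold normset. rewrite OK_emb. split.
  - intros [[p ->] Hn]. exists p. split; [reflexivity|]. apply (In_qnorm_list m k disc_pos_zq).
    rewrite Nrm_emb in Hn. now apply eq_IZR.
  - intros [p [-> Hp]]. apply (In_qnorm_list m k disc_pos_zq) in Hp.
    split; [now exists p|]. now rewrite Nrm_emb, Hp.
Qed.

Lemma has_card_units : has_card (units q) (length (qnorm_list m k 1)).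
Proof.
  apply has_card_image with (f := emb); [apply NoDup_qnorm_list | apply emb_inj |].
  intros w. unfold units. rewrite OK_emb. split.
  - intros [[p ->] [w' [Hw' E]]]. exists p. split; [reflexivity|].
    apply (In_qnorm_list m k disc_pos_zq). apply OK_emb in Hw' as [p' ->].
    rewrite <- emb_qmul, <- emb_one in E. apply emb_inj, (f_equal (qnorm m k)) in E.
    rewrite qnorm_mul in E.
    replace (qnorm m k (1, 0)%Z) with 1%Z in E by (unfold qnorm; cbn [fst snd]; ring).
    pose proof (qnorm_nonneg m k disc_pos_zq p). pose proof (qnorm_nonneg m k disc_pos_zq p').
    now apply Z.eq_mul_1_nonneg in E.
  - intros [p [-> Hp]]. apply (In_qnorm_list m k disc_pos_zq) in Hp.
    split; [now exists p|]. exists (emb (qconj m p)). split; [apply OK_emb; eauto|].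
    now rewrite <- emb_qmul, qmul_qconj, Hp, emb_one.
Qed.

Definition pair_list (M : Z) : list ((Z * Z) * (Z * Z)) :=
  filter (fun v => matrix_pairb m k (fst v) (snd v))
    (list_prod (qnorm_list m k (M + Z.of_nat q)) (qnorm_list m k M)).

Lemma In_pair_list M v : In v (pair_list M) <->
  is_matrix_pair m k (fst v) (snd v) /\
  qnorm m k (fst v) = (M + Z.of_nat q)%Z /\ qnorm m k (snd v) = M.
Proof.
  destruct v as [al be]. unfold pair_list.
  rewrite filter_In, in_prod_iff, !(In_qnorm_list m k disc_pos_zq),
    <- (matrix_pairP m k disc_pos_zq).
  tauto.
Qed.

Lemma NoDup_pair_list M : NoDup (pair_list M).
Proof. apply NoDup_filter, NoDup_list_prod; apply NoDup_qnorm_list. Qed.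

Lemma length_pair_list M :
  ((if cn_condb m k (M + Z.of_nat q) then 1 else 2) * length (pair_list M)
   = length (qnorm_list m k M) * length (qnorm_list m k (M + Z.of_nat q)))%nat.
Proof.
  apply length_filter_list_prod. intros al Hal. apply (In_qnorm_list m k disc_pos_zq) in Hal.
  assert (Hdich : forall be, In be (qnorm_list m k M) -> dichotomyb m k al be = true).
  { intros be Hbe. apply (In_qnorm_list m k disc_pos_zq) in Hbe.
    apply (dichotomyb_zq q al be Hq). lia. }
  rewrite <- Hal. destruct (cn_condb m k (qnorm m k al)) eqn:Hc.
  - rewrite forallb_filter_id; [apply Nat.mul_1_l|]. apply forallb_forall. intros be Hbe.
    now apply (dichotomybP m k al be (Hdich be Hbe)).
  - pose proof (filter_length (matrix_pairb m k al) (qnorm_list m k M)) as Hsplit.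
    assert (Htwist : length (filter (matrix_pairb m k al) (qnorm_list m k M))
      = length (filter (fun be => negb (matrix_pairb m k al be)) (qnorm_list m k M))).
    { rewrite <- (Permutation_filter_length _ _ _ (qmul_unit_Permutation m k disc_pos_zq
        (twist m k) M (qnorm_twist m k))), filter_map_swap, length_map.
      f_equal. apply filter_ext_in. intros be Hbe.
      now apply (dichotomybP m k al be (Hdich be Hbe)). }
    lia.
Qed.

Definition pair_product (v : (Z * Z) * (Z * Z)) : Z * Z := qmul m k (fst v) (qconj m (snd v)).

Lemma fibre_size_pair_product M v : In v (pair_list M) ->
  fibre_size Zpair_eq_dec pair_product (pair_product v) (pair_list M) = length (qnorm_list m k 1).
Proof.
  intros Hv. destruct v as [al be].
  apply In_pair_list in Hv as [Hpair [Hal Hbe]]. cbn [fst snd] in *.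
  pose proof (qnorm_nonneg m k disc_pos_zq be). pose proof (qset_ge3 q Hq).
  unfold fibre_size.
  rewrite <- (length_map (fun e => (qmul m k e al, qmul m k e be)) (qnorm_list m k 1)).
  apply Permutation_length, NoDup_Permutation.
  - apply NoDup_filter, NoDup_pair_list.
  - apply Injective_map_NoDup; [| apply NoDup_qnorm_list].
    intros e e' E. apply (f_equal fst) in E. apply (qmul_reg_r al); [lia | exact E].
  - intros [al' be']. rewrite filter_In, in_map_iff. split.
    + intros [Hin Hf]. destruct (Zpair_eq_dec _ _) as [Hp | ]; [|discriminate].
      apply In_pair_list in Hin as [Hpair' [Hal' Hbe']]. cbn [fst snd] in *.
      destruct (matrix_pair_fibre al be al' be' Hpair Hpair' ltac:(lia) ltac:(lia) ltac:(lia)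
        (eq_sym Hp)) as [e [He [-> ->]]].
      exists e. split; [reflexivity|]. now apply (In_qnorm_list m k disc_pos_zq).
    + intros [e [E He]]. injection E as <- <-. apply (In_qnorm_list m k disc_pos_zq) in He.
      destruct (matrix_pair_unit_mul m k e al be He Hpair) as [Hpair' Hprod].
      split.
      * apply In_pair_list. cbn [fst snd]. rewrite !qnorm_mul, He, Hal, Hbe.
        repeat split; [assumption | ring..].
      * unfold pair_product. cbn [fst snd]. rewrite Hprod. now destruct (Zpair_eq_dec _ _).
Qed.

Definition xy_point (p : Z * Z) : R * R := (Im (emb p), Re (emb p)).

Lemma xy_point_inj : Injective xy_point.
Proof.
  intros p p' E. unfold xy_point in E. injection E as E1 E2.
  apply emb_inj, injective_projections; assumption.
Qed.

Lemma xy_point_pair_product a b c d : isSL2 a b c d ->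
  xy_point (pair_product (alpha m k a b c d, beta m k a b c d)) = (xg q a b c d, yg q a b c d).
Proof.
  intros Hdet. unfold xy_point, pair_product. cbn [fst snd].
  rewrite emb_qmul, emb_qconj, <- xy_emb by assumption. reflexivity.
Qed.

Lemma Lset_pair_list M n : n = IZR M + 2 * lam q ^ 2 ->
  forall w, Lset q n w <-> exists v, In v (pair_list M) /\ w = xy_point (pair_product v).
Proof.
  intros Hn w. split.
  - intros [a [b [c [d [Hdet [Hr ->]]]]]].
    exists (alpha m k a b c d, beta m k a b c d). rewrite xy_point_pair_product by assumption.
    split; [|reflexivity]. apply In_pair_list. cbn [fst snd].
    assert (Hbe : qnorm m k (beta m k a b c d) = M).
    { apply eq_IZR. rewrite Rgam_qnorm_beta, Hn in Hr by assumption. lra. }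
    rewrite qnorm_alpha_SL2, Hbe by assumption. split; [now exists a, b, c, d | auto].
  - intros [[al be] [Hv ->]]. apply In_pair_list in Hv as [Hpair [Hal Hbe]]. cbn [fst snd] in *.
    destruct (matrix_pair_det m k disc_pos_zq al be Hpair) as [a [b [c [d [<- [<- Hdet]]]]]];
      [rewrite (disc_mZ_kZ q Hq); lia|].
    exists a, b, c, d. rewrite xy_point_pair_product, Rgam_qnorm_beta, Hbe by assumption.
    auto.
Qed.

Lemma has_card_Lset M n : n = IZR M + 2 * lam q ^ 2 ->
  has_card (Lset q n) (length (nodup Zpair_eq_dec (map pair_product (pair_list M)))).
Proof.
  intros Hn. apply has_card_image with (f := xy_point); [apply NoDup_nodup | apply xy_point_inj |].
  intros w. rewrite (Lset_pair_list M n Hn). split.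
  - intros [v [Hv ->]]. exists (pair_product v). split; [reflexivity|]. now apply nodup_In, in_map.
  - intros [p [-> Hp]]. apply nodup_In, in_map_iff in Hp as [v [<- Hv]]. eauto.
Qed.

Lemma card_identity M :
  ((if cn_condb m k (M + Z.of_nat q) then 1 else 2)
     * (length (qnorm_list m k 1) * length (nodup Zpair_eq_dec (map pair_product (pair_list M))))
   = length (qnorm_list m k M) * length (qnorm_list m k (M + Z.of_nat q)))%nat.
Proof.
  rewrite <- length_pair_list,
    <- (length_uniform_fibres Zpair_eq_dec pair_product (length (qnorm_list m k 1)));
    [reflexivity|].
  apply fibre_size_pair_product.
Qed.

Lemma length_qnorm_list_1_pos : (0 < length (qnorm_list m k 1))%nat.
Proof.
  destruct (qnorm_list m k 1) as [|p l] eqn:E; [|cbn; lia].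
  assert (Hone : In (1, 0)%Z (qnorm_list m k 1))
    by (apply (In_qnorm_list m k disc_pos_zq); unfold qnorm; cbn [fst snd]; ring).
  now rewrite E in Hone.
Qed.

Lemma Nset_qnorm n : Nset q n -> exists M, n = IZR M + 2 * lam q ^ 2.
Proof.
  intros [a [b [c [d [Hdet <-]]]]]. exists (qnorm m k (beta m k a b c d)).
  now apply Rgam_qnorm_beta.
Qed.

Lemma cn_cond_iff M n : n = IZR M + 2 * lam q ^ 2 ->
  cn_cond q n <-> cn_condb m k (M + Z.of_nat q) = true.
Proof.
  intros Hn. set (Q := Z.of_nat q) in *.
  assert (Hn' : n = IZR M + IZR Q / 2) by (unfold Q; rewrite IZR_of_nat_q; lra).
  assert (HqQ : INR q = IZR Q) by apply INR_IZR_INZ.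
  pose proof (disc_mZ_kZ q Hq) as Hdisc. fold Q in Hdisc.
  unfold cn_cond, cn_condb.
  destruct (mZ_cases q) as [Hm | Hm]; rewrite Hm in Hdisc |- *; cbn [Z.eqb].
  - assert (Hev : Nat.even q = true) by now apply (qset_even q Hq).
    rewrite Hev, Z.even_spec. split.
    + intros [[_ [K HK]] | [HK _]]; [|discriminate].
      exists (K + k)%Z. apply eq_IZR. rewrite <- Hdisc in Hn' |- *. IZR_expand. lra.
    + intros [j Hj]. left. split; [reflexivity|]. exists (j - k)%Z.
      rewrite Hn'. apply (f_equal IZR) in Hj. rewrite <- Hdisc in Hj |- *. IZR_expand. lra.
  - assert (Hev : Nat.even q = false).
    { destruct (Nat.even q) eqn:E; [|reflexivity]. apply (qset_even q Hq) in E. lia. }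
    rewrite Hev, Z.eqb_eq, Z.mod_divide, Hdisc by lia. split.
    + intros [[HK _] | [_ [K HK]]]; [discriminate|].
      apply Z.divide_add_r; [|apply Z.divide_refl].
      apply (Gauss _ 2).
      * exists (K - 1)%Z. apply eq_IZR. rewrite HqQ, Hn' in HK. IZR_expand. lra.
      * apply bezout_rel_prime, (Bezout_intro _ _ _ (-1) (2 * k)). lia.
    + intros [j Hj]. right. split; [reflexivity|]. exists (2 * j - 1)%Z.
      rewrite HqQ, Hn'. apply (f_equal IZR) in Hj. IZR_expand. lra.
Qed.

Lemma cn_value M n : n = IZR M + 2 * lam q ^ 2 ->
  cn q n = if cn_condb m k (M + Z.of_nat q) then 1/2 else 1/4.
Proof.
  intros Hn. pose proof (cn_cond_iff M n Hn) as Hiff. unfold cn.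
  destruct (excluded_middle_informative (cn_cond q n)) as [C | C],
    (cn_condb m k (M + Z.of_nat q)) eqn:E; try reflexivity; exfalso.
  - apply Hiff in C. congruence.
  - now apply C, Hiff.
Qed.

End ImaginaryQuadratic.

Lemma INR_card_formula (b : bool) (L U R1 R2 : nat) : (0 < U)%nat ->
  ((if b then 1 else 2) * (U * L) = R2 * R1)%nat ->
  INR L = 2 * (if b then 1/2 else 1/4) / INR U * INR R1 * INR R2.
Proof.
  intros HU H. apply (f_equal INR) in H. rewrite !mult_INR in H.
  assert (0 < INR U) by now apply lt_0_INR.
  destruct b; cbn [INR] in H; field_simplify_eq; nra.
Qed.

Theorem lemma2p4 (q : nat) (Hq : qset q) :
  (forall a b c d : Z, isSL2 a b c d ->
     let n := Rgam q a b c d in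
     let z := zq q in
     let r := IZR (a + d) in
     let u := IZR b - Cmod z ^ 2 * IZR c - 2 * mu q * IZR d in
     let s := IZR a - IZR d - 2 * mu q * IZR c in
     let t := IZR b + Cmod z ^ 2 * IZR c in
     (exists ui si ti : Z, u = IZR ui /\ s = IZR si /\ t = IZR ti) /\
     Nrm (RtoC u + RtoC r * z)%C = n + 2 * lam q ^ 2 /\
     Nrm (RtoC t + RtoC s * z)%C = n - 2 * lam q ^ 2 /\
     ((yg q a b c d, xg q a b c d) : C)
       = ((RtoC u + RtoC r * z) * (RtoC t + RtoC s * Cconj z))%C) /\
  (forall n : R, Nset q n ->
     exists L U R1 R2 : nat,
       has_card (Lset q n) L /\ has_card (units q) U /\
       has_card (normset q (n + 2 * lam q ^ 2)) R1 /\
       has_card (normset q (n - 2 * lam q ^ 2)) R2 /\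
       INR L = 2 * cn q n / INR U * INR R1 * INR R2).
Proof.
  split; [exact (alpha_beta_factorisation q Hq)|].
  intros n Hn. destruct (Nset_qnorm q Hq n Hn) as [M HM].
  set (M1 := (M + Z.of_nat q)%Z).
  exists (length (nodup Zpair_eq_dec (map (pair_product q) (pair_list q M)))),
    (length (qnorm_list (mZ q) (kZ q) 1)), (length (qnorm_list (mZ q) (kZ q) M1)),
    (length (qnorm_list (mZ q) (kZ q) M)).
  split; [|split; [|split; [|split]]].
  - exact (has_card_Lset q Hq M n HM).
  - exact (has_card_units q Hq).
  - replace (n + 2 * lam q ^ 2) with (IZR M1)
      by (unfold M1; rewrite plus_IZR, IZR_of_nat_q, HM; ring).
    exact (has_card_normset q Hq M1).
  - replace (n - 2 * lam q ^ 2) with (IZR M) by lra.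
    exact (has_card_normset q Hq M).
  - rewrite (cn_value q Hq M n HM).
    apply INR_card_formula; [exact (length_qnorm_list_1_pos q Hq) | exact (card_identity q Hq M)].
Qed.
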